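(* Let $\mathcal X=\{x_{n,k}\}$ be a Marcinkiewicz–Zygmund family on $\mathbb T$ with weights $\tau=\{\tau_{n,k}\}$ and constants $A,B>0$ (as in the context). Let $f\in C(\mathbb T)$, $n\in\mathbb N$, let $P_nf=\sum_{|k|\le n}\hat f(k)e^{2\pi ikx}$ be the orthogonal projection of $f$ onto $\mathcal T_n$, and let $p_n=\operatorname{argmin}_{p\in\mathcal T_n}\sum_{k=1}^{L_n}|f(x_{n,k})-p(x_{n,k})|^2\tau_{n,k}$. Then $$\|P_nf-p_n\|_2^2\le A^{-2}B\sum_{k=1}^{L_n}|f(x_{n,k})-P_nf(x_{n,k})|^2\tau_{n,k}.$$
   Context: $\mathbb T=\mathbb R/\mathbb Z$, identified with $(-1/2,1/2]$, with Lebesgue measure; $\|\cdot\|_2$ is the $L^2(\mathbb T)$-norm. $\mathcal T_n$ is the space of trigonometric polynomials $\sum_{k=-n}^n c_ke^{2\pi ikx}$; $\hat f(k)=\int_0^1 f(x)e^{-2\pi ikx}dx$. A doubly-indexed set $\mathcal X=\{x_{n,k}: n\in\mathbb N, k=1,\dots,L_n\}\subseteq\mathbb T$ with weights $\tau_{n,k}>0$ is a Marcinkiewicz–Zygmund family if there are constants $A,B>0$ independent of $n$ with $A\|p\|_2^2\le\sum_{k=1}^{L_n}|p(x_{n,k})|^2\tau_{n,k}\le B\|p\|_2^2$ for all $p\in\mathcal T_n$, $n\in\mathbb N$. *)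

From HB Require Import structures.
From mathcomp Require Import all_boot all_order all_algebra.
From mathcomp Require Import all_classical all_reals all_analysis.
From mathcomp Require Import complex.
Set Implicit Arguments. Unset Strict Implicit. Unset Printing Implicit Defensive.
Import Order.TTheory GRing.Theory Num.Theory.
Import numFieldNormedType.Exports.
Local Open Scope classical_set_scope.
Local Open Scope ring_scope.

Section Defs.
Variable R : realType.

Definition cabs2 (z : R[i]) : R := complex.Re z ^+ 2 + complex.Im z ^+ 2.

Definition ek (k : int) (x : R) : R[i] :=
  Complex (cos (2 * pi * k%:~R * x)) (sin (2 * pi * k%:~R * x)).

Definition cint (g : R -> R[i]) : R[i] :=
  Complex (Rintegral lebesgue_measure `[0%R, 1%R] (fun x => complex.Re (g x)))
          (Rintegral lebesgue_measure `[0%R, 1%R] (fun x => complex.Im (g x))).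

(* squared L^2(T) norm, T = R/Z with Lebesgue measure (period [0,1]) *)
Definition l2sq (g : R -> R[i]) : R :=
  Rintegral lebesgue_measure `[0%R, 1%R] (fun x => cabs2 (g x)).

Definition contT (f : R -> R[i]) : Prop :=
  continuous (fun x : R^o => complex.Re (f x) : R^o) /\
  continuous (fun x : R^o => complex.Im (f x) : R^o) /\
  (forall x, f (x + 1) = f x).

Definition fhat (f : R -> R[i]) (k : int) : R[i] :=
  cint (fun x => f x * ek (- k) x).

Definition trigpoly (n : nat) (p : R -> R[i]) : Prop :=
  exists c : int -> R[i], forall x,
    p x = \sum_(i < (2 * n).+1) c (i%:Z - n%:Z) * ek (i%:Z - n%:Z) x.

Definition Pn (n : nat) (f : R -> R[i]) (x : R) : R[i] :=
  \sum_(i < (2 * n).+1) fhat f (i%:Z - n%:Z) * ek (i%:Z - n%:Z) x.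

Definition dsum (X : nat -> nat -> R) (tau : nat -> nat -> R) (L : nat -> nat)
  (n : nat) (g : R -> R[i]) : R :=
  \sum_(1 <= k < (L n).+1) cabs2 (g (X n k)) * tau n k.

Definition MZ_family (X : nat -> nat -> R) (tau : nat -> nat -> R)
  (L : nat -> nat) (A B : R) : Prop :=
  0 < A /\ 0 < B /\
  (forall n k, (1 <= k <= L n)%N -> 0 < tau n k) /\
  (forall n p, trigpoly n p ->
     A * l2sq p <= dsum X tau L n p /\ dsum X tau L n p <= B * l2sq p).

End Defs.

From Pilot Require Import Defs.
From HB Require Import structures.
From mathcomp Require Import all_boot all_order all_algebra.
From mathcomp Require Import all_classical all_reals all_analysis.
From mathcomp Require Import complex ring lra.
Set Implicit Arguments. Unset Strict Implicit. Unset Printing Implicit Defensive.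
Import Order.TTheory GRing.Theory Num.Theory.
Local Open Scope ring_scope.

(* The least squares polynomial p_n is the orthogonal projection of f onto T_n
   for the discrete inner product given by the nodes and weights, so f - p_n is
   discretely orthogonal to P_n f - p_n. By Pythagoras the discrete norm of
   f - P_n f is at least that of P_n f - p_n, and the lower Marcinkiewicz-Zygmund
   inequality turns this into an L^2 bound with constant A^-1 <= A^-2 B. *)

Definition cdot (R : realType) (u v : R[i]) : R :=
  complex.Re u * complex.Re v + complex.Im u * complex.Im v.

Lemma cabs2_ge0 (R : realType) (u : R[i]) : 0 <= cabs2 u.
Proof. by rewrite /cabs2 addr_ge0 ?sqr_ge0. Qed.

Lemma cabs2_subZ (R : realType) (u v : R[i]) (t : R) :
  cabs2 (u - t%:C%C * v) = cabs2 u - 2 * t * cdot u v + t ^+ 2 * cabs2 v.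
Proof. by case: u => a b; case: v => c d; rewrite /cabs2 /cdot /=; ring. Qed.

Lemma quadratic_ge0_lin_coef_eq0 (R : realFieldType) (b c : R) :
  0 <= c -> (forall t, 0 <= t ^+ 2 * c - 2 * t * b) -> b = 0.
Proof.
move=> c_ge0 hq; pose t := b / (c + 1).
have bE : b = t * (c + 1) by rewrite /t divfK // gt_eqF // ltr_wpDl.
have := hq t; rewrite [X in _ - 2 * t * X]bE => ht.
have t0 : t = 0 by apply/eqP; rewrite -sqrf_eq0; nra.
by rewrite bE t0 mul0r.
Qed.

Lemma trigpolyD (R : realType) n (p q : R -> R[i]) :
  trigpoly n p -> trigpoly n q -> trigpoly n (fun x => p x + q x).
Proof.
move=> [c hc] [d hd]; exists (fun k => c k + d k) => x.
by rewrite hc hd -big_split; apply: eq_bigr => i _; rewrite mulrDl.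
Qed.

Lemma trigpolyZ (R : realType) n (a : R[i]) (p : R -> R[i]) :
  trigpoly n p -> trigpoly n (fun x => a * p x).
Proof.
move=> [c hc]; exists (fun k => a * c k) => x.
by rewrite hc mulr_sumr; apply: eq_bigr => i _; rewrite mulrA.
Qed.

Lemma trigpolyB (R : realType) n (p q : R -> R[i]) :
  trigpoly n p -> trigpoly n q -> trigpoly n (fun x => p x - q x).
Proof.
move=> hp /(trigpolyZ (-1)) hq.
by have := trigpolyD hp hq; congr trigpoly; apply/funext => x; rewrite mulN1r.
Qed.

Lemma trigpoly_Pn (R : realType) n (f : R -> R[i]) : trigpoly n (Pn n f).
Proof. by exists (fhat f). Qed.

Section DiscreteLeastSquares.
Variables (R : realType) (X tau : nat -> nat -> R) (L : nat -> nat) (n : nat).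
Hypothesis tau_gt0 : forall k, (1 <= k <= L n)%N -> 0 < tau n k.

Local Notation dsum := (dsum X tau L n).

Definition dinner (g h : R -> R[i]) : R :=
  \sum_(1 <= k < (L n).+1) cdot (g (X n k)) (h (X n k)) * tau n k.

Lemma dsum_ge0 (g : R -> R[i]) : 0 <= dsum g.
Proof.
rewrite /Defs.dsum big_nat_cond; apply: sumr_ge0 => k /andP[/andP[k1 k2] _].
by rewrite mulr_ge0 ?cabs2_ge0 // ltW // tau_gt0 // k1 -ltnS.
Qed.

Lemma dsum_subZ (g h : R -> R[i]) (t : R) :
  dsum (fun x => g x - t%:C%C * h x) = dsum g - 2 * t * dinner g h + t ^+ 2 * dsum h.
Proof.
rewrite /Defs.dsum /dinner !mulr_sumr -sumrB -big_split /=.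
by apply: eq_bigr => k _; rewrite cabs2_subZ; ring.
Qed.

Lemma dsum_pythagoras (g h : R -> R[i]) :
  dinner g h = 0 -> dsum (fun x => g x - h x) = dsum g + dsum h.
Proof.
move=> gh0; have := dsum_subZ g h 1; rewrite gh0 expr1n mulr0 subr0 mul1r.
by move=> <-; congr Defs.dsum; apply/funext => x; rewrite mul1r.
Qed.

(* Perturbing the minimiser [pn] along [q] by real multiples gives a quadratic
   in the step with a minimum at 0, so its linear coefficient vanishes. *)
Lemma least_squares_orthogonal (f pn q : R -> R[i]) :
  trigpoly n pn -> trigpoly n q ->
  (forall p, trigpoly n p ->
     dsum (fun x => f x - pn x) <= dsum (fun x => f x - p x)) ->
  dinner (fun x => f x - pn x) q = 0.
Proof.
move=> hpn hq hmin; apply: quadratic_ge0_lin_coef_eq0 (dsum_ge0 q) _ => t.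
have := hmin _ (trigpolyD hpn (trigpolyZ t%:C%C hq)).
rewrite -(subr_ge0 (dsum _)).
have -> : (fun x => f x - (pn x + t%:C%C * q x))
        = (fun x => (f x - pn x) - t%:C%C * q x).
  by apply/funext => x; ring.
by rewrite dsum_subZ; lra.
Qed.

End DiscreteLeastSquares.

Lemma MZ_l2_bound (R : realFieldType) (A B N H D : R) :
  0 < A -> 0 < B -> A * N <= H -> H <= B * N -> H <= D ->
  N <= A ^- 2 * B * D.
Proof.
move=> A_gt0 B_gt0 lowerAN upperBN HleD.
rewrite -mulrA ler_pdivlMl ?exprn_gt0 //.
have [N_le0 | N_gt0] := lerP N 0; first by nra.
have AleB : A <= B by nra.
nra.
Qed.

Theorem proposition2p5 (R : realType) (X : nat -> nat -> R)
  (tau : nat -> nat -> R) (L : nat -> nat) (A B : R)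
  (hMZ : MZ_family X tau L A B)
  (f : R -> R[i]) (hf : contT f) (n : nat) (pn : R -> R[i])
  (hpn : trigpoly n pn)
  (hmin : forall p, trigpoly n p ->
     dsum X tau L n (fun x => f x - pn x) <= dsum X tau L n (fun x => f x - p x)) :
  l2sq (fun x => Pn n f x - pn x)
    <= A ^- 2 * B * dsum X tau L n (fun x => f x - Pn n f x).
Proof.
have [A_gt0 [B_gt0 [tau_gt0 hMZn]]] := hMZ.
have tau_n_gt0 := tau_gt0 n.
set h := fun x => Pn n f x - pn x.
have htrig : trigpoly n h by apply: trigpolyB (trigpoly_Pn n f) hpn.
have hdecomp : dsum X tau L n (fun x => f x - Pn n f x)
             = dsum X tau L n (fun x => f x - pn x) + dsum X tau L n h.
  rewrite -dsum_pythagoras ?(least_squares_orthogonal tau_n_gt0 hpn htrig hmin) //.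
  by congr dsum; apply/funext => x; rewrite /h; ring.
have [lowerMZ upperMZ] := hMZn n h htrig.
apply: MZ_l2_bound lowerMZ upperMZ _ => //.
by rewrite hdecomp lerDr (dsum_ge0 X tau_n_gt0).
Qed.
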